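(* Let $p>0$ be fixed. Suppose there exists a choice of $x_{\mathrm{home}}\in\mathbb{Z}^2$ such that $\mathbb{E}[T]=\infty$ for any sequence of instructions. Then $\mathbb{E}[T]=\infty$ (for any sequence of instructions) for any choice of $x_{\mathrm{home}}$ other than the origin.
   Context: A sequence of instructions is an infinite walk $(x_t)_{t\ge 0}$ in $\mathbb{Z}^2$ with $x_0=0$ and $x_{t+1}-x_t\in\{(\pm1,0),(0,\pm1)\}$; it may depend on $x_{\mathrm{home}}$. The guided random walk with error probability $p$ following it is the Markov chain $(X_t)_{t\ge0}$ with $X_0=0$ and independent increments, $X_{t+1}-X_t = x_{t+1}-x_t$ with probability $1-p$, and $X_{t+1}-X_t$ uniformly distributed on $\{(\pm1,0),(0,\pm1)\}$ with probability $p$. $T := \inf\{t\ge0 : X_t = x_{\mathrm{home}}\}$. *)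

From HB Require Import structures.
From mathcomp Require Import all_boot all_order all_algebra.
From mathcomp Require Import all_classical all_reals.
From mathcomp Require Import ereal topology normedtype sequences.
Set Implicit Arguments. Unset Strict Implicit. Unset Printing Implicit Defensive.
Import Order.TTheory GRing.Theory Num.Theory.
Local Open Scope ring_scope.

Definition pt := (int * int)%type.
Definition origin : pt := (0, 0).

Definition dirv (d : 'I_4) : pt :=
  match val d with
  | 0%N => (1, 0)
  | 1%N => (-1, 0)
  | 2%N => (0, 1)
  | _ => (0, -1)
  end.

Definition is_unit_step (v : pt) : bool :=
  [|| v == (1, 0), v == (-1, 0), v == (0, 1) | v == (0, -1)].

Definition ptsub (a b : pt) : pt := (a.1 - b.1, a.2 - b.2).

(* A sequence of instructions: an infinite nearest-neighbour walk from 0. *)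
Definition is_instr (x : nat -> pt) : Prop :=
  x 0%N = origin /\ forall t, is_unit_step (ptsub (x t.+1) (x t)).

Section Walk.
Variable R : realType.

(* Law of the increment X_{t+1}-X_t of the guided random walk, as a
   distribution on the four unit steps: with prob. 1-p follow the
   instruction, with prob. p a uniform step. *)
Definition step_weight (p : R) (x : nat -> pt) (t : nat) (d : 'I_4) : R :=
  (1 - p) * (dirv d == ptsub (x t.+1) (x t))%:R + p / 4.

Definition pos (t : nat) (s : {ffun 'I_t -> 'I_4}) (k : nat) : pt :=
  (\sum_(i < t | (i < k)%N) (dirv (s i)).1,
   \sum_(i < t | (i < k)%N) (dirv (s i)).2).

(* P(T > t) = P(X_k <> x_home for all 0 <= k <= t), computed from the
   (product) law of the first t independent increments. *)
Definition prob_T_gt (p : R) (x : nat -> pt) (home : pt) (t : nat) : R :=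
  \sum_(s : {ffun 'I_t -> 'I_4})
     (\prod_(i < t) step_weight p x i (s i)) *
     ([forall k : 'I_t.+1, pos s k != home])%:R.

(* E[T] = sum_{t>=0} P(T > t), as an extended real (T valued in N u {oo}). *)
Definition expected_T (p : R) (x : nat -> pt) (home : pt) : \bar R :=
  (\sum_(0 <= t <oo) (prob_T_gt p x home t)%:E)%E.

End Walk.

From HB Require Import structures.
From mathcomp Require Import all_boot all_order all_algebra.
From mathcomp Require Import all_classical all_reals.
From mathcomp Require Import ereal topology normedtype sequences.
Import Order.TTheory GRing.Theory Num.Theory.
Local Open Scope ring_scope.

(* With positive probability the first step of the walk is a given unit step
   d; from then on the walk is again a guided random walk, following the
   instructions shifted by x_1, and it still has to hit x_home - d.  Hence
   E[T(x_home)] >= P(first step is d) * E[T'(x_home - d)] whenever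
   x_home <> 0, so the set of homes with E[T] = oo for all instructions is
   closed under moves to nonzero neighbours.  Since Z^2 minus the origin is
   connected and E[T] = 0 for x_home = 0, that set is either empty or all of
   Z^2 minus the origin. *)

Lemma ptsubBB (a b c : pt) : ptsub (ptsub a c) (ptsub b c) = ptsub a b.
Proof. by rewrite /ptsub /=; congr pair; rewrite opprB addrA subrK. Qed.

Definition shift_instr (x : nat -> pt) : nat -> pt :=
  fun t => ptsub (x t.+1) (x 1%N).

Lemma is_instr_shift x : is_instr x -> is_instr (shift_instr x).
Proof.
move=> [_ unit_x]; split; first by rewrite /shift_instr /ptsub !subrr.
by move=> t; rewrite /shift_instr ptsubBB.
Qed.

Definition straight_instr : nat -> pt := fun t => (t%:Z, 0).

Lemma is_instr_straight : is_instr straight_instr.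
Proof. by split=> // t; rewrite /is_unit_step /ptsub /= subrr intS addrK eqxx. Qed.

Section FfunCons.
Context {T : Type} {t : nat}.

Definition ffun_cons (d : T) (s : {ffun 'I_t -> T}) : {ffun 'I_t.+1 -> T} :=
  [ffun i => if unlift ord0 i is Some j then s j else d].

Lemma ffun_cons0 d s : ffun_cons d s ord0 = d.
Proof. by rewrite ffunE unlift_none. Qed.

Lemma ffun_consS d s j : ffun_cons d s (lift ord0 j) = s j.
Proof. by rewrite ffunE liftK. Qed.

Lemma ffun_cons_inj d : injective (ffun_cons d).
Proof.
by move=> s1 s2 eq_s; apply/ffunP => j; rewrite -(ffun_consS d s1) eq_s ffun_consS.
Qed.

End FfunCons.

Lemma pos0 t (s : {ffun 'I_t -> 'I_4}) : pos s 0 = origin.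
Proof. by rewrite /pos !big_pred0. Qed.

Lemma ptsub_pos_cons t d (s : {ffun 'I_t -> 'I_4}) k :
  ptsub (pos (ffun_cons d s) k.+1) (dirv d) = pos s k.
Proof.
rewrite /pos /ptsub /=; congr pair;
  rewrite big_mkcond big_ord_recl /= ffun_cons0 addrC addrK [RHS]big_mkcond;
  by apply: eq_bigr => i _; rewrite ffun_consS ltnS.
Qed.

Lemma avoid_cons t d (s : {ffun 'I_t -> 'I_4}) h : h <> origin ->
  [forall k : 'I_t.+1, pos s k != ptsub h (dirv d)] ->
  [forall k : 'I_t.+2, pos (ffun_cons d s) k != h].
Proof.
move=> hne /forallP avoid; apply/forallP => -[[|k] lt_k] /=.
  by rewrite pos0; apply/eqP => /esym.
by apply: contra (avoid (@Ordinal t.+1 k lt_k)) => /eqP hit; rewrite -hit ptsub_pos_cons.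
Qed.

Lemma expected_T_origin (R : realType) (p : R) x : expected_T p x origin = 0%E.
Proof.
rewrite /expected_T eseries0 // => t _ _; rewrite /prob_T_gt big1 // => s _.
suff /negbTE -> : ~~ [forall k : 'I_t.+1, pos s k != origin] by rewrite mulr0.
by apply/forallPn; exists ord0; rewrite pos0 eqxx.
Qed.

Section GuidedWalk.
Variables (R : realType) (p : R).
Hypotheses (p_gt0 : 0 < p) (p_le1 : p <= 1).

Lemma step_weight_ge0 x t d : 0 <= step_weight p x t d.
Proof.
by apply: addr_ge0; [apply: mulr_ge0; rewrite ?subr_ge0 | apply: divr_ge0; rewrite ?ltW].
Qed.

Lemma step_weight_gt0 x t d : 0 < step_weight p x t d.
Proof.
by apply: ltr_wpDl; [apply: mulr_ge0; rewrite ?subr_ge0 | apply: divr_gt0].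
Qed.

Lemma step_weight_shift x t d :
  step_weight p x t.+1 d = step_weight p (shift_instr x) t d.
Proof. by rewrite /step_weight /shift_instr ptsubBB. Qed.

Lemma prob_T_gt_ge0 x h t : 0 <= prob_T_gt p x h t.
Proof.
apply: sumr_ge0 => s _; rewrite mulr_ge0 ?ler0n //.
by apply: prodr_ge0 => i _; apply: step_weight_ge0.
Qed.

Lemma prob_T_gt_first_step x h d t : h <> origin ->
  step_weight p x 0 d * prob_T_gt p (shift_instr x) (ptsub h (dirv d)) t
  <= prob_T_gt p x h t.+1.
Proof.
move=> hne; rewrite /prob_T_gt mulr_sumr.
set F := fun s' : {ffun 'I_t.+1 -> 'I_4} =>
  (\prod_(i < t.+1) step_weight p x i (s' i)) *
  ([forall k : 'I_t.+2, pos s' k != h])%:R.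
have F_ge0 s' : 0 <= F s'.
  by rewrite mulr_ge0 ?ler0n //; apply: prodr_ge0 => i _; apply: step_weight_ge0.
apply: (@le_trans _ _ (\sum_s F (ffun_cons d s))).
  apply: ler_sum => s _; rewrite /F big_ord_recl ffun_cons0 -mulrA.
  apply: ler_wpM2l; first exact: step_weight_ge0.
  under [X in _ <= X * _]eq_bigr => i _ do rewrite ffun_consS lift0 step_weight_shift.
  apply: ler_wpM2l; first by apply: prodr_ge0 => i _; apply: step_weight_ge0.
  case: (boolP [forall k : 'I_t.+1, _]) => [/(@avoid_cons t d s h hne) -> // | _].
  exact: ler0n.
rewrite -(big_imset _ (in2W (@ffun_cons_inj _ t d))) /= [leLHS]big_mkcond.
by apply: ler_sum => s' _; case: ifP => _; rewrite ?lexx ?F_ge0.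
Qed.

Lemma expected_T_first_step x h d : h <> origin ->
  ((step_weight p x 0 d)%:E * expected_T p (shift_instr x) (ptsub h (dirv d))
   <= expected_T p x h)%E.
Proof.
move=> hne; have P_ge0 k : (0 <= (prob_T_gt p x h k)%:E)%E.
  by rewrite lee_fin prob_T_gt_ge0.
rewrite /expected_T (@le_trans _ _ (\sum_(k <oo) (prob_T_gt p x h (k + 1))%:E)%E) //.
  rewrite -nneseriesZl => [|k _]; last by rewrite lee_fin prob_T_gt_ge0.
  apply: lee_nneseries => [k _ _|k _]; rewrite -EFinM lee_fin.
    by rewrite mulr_ge0 ?step_weight_ge0 ?prob_T_gt_ge0.
  by rewrite addn1 prob_T_gt_first_step.
rewrite [leRHS]nneseries_recl // (nneseries_addn (f := fun k => (prob_T_gt p x h k)%:E)) //.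
exact: leeDr.
Qed.

Lemma expected_T_infinite_step h d : h <> origin ->
  (forall x, is_instr x -> expected_T p x (ptsub h (dirv d)) = +oo%E) ->
  forall x, is_instr x -> expected_T p x h = +oo%E.
Proof.
move=> hne inf_h x hx; apply/eqP; rewrite -leye_eq.
have w_gt0 : (0 < (step_weight p x 0 d)%:E)%E by rewrite lte_fin step_weight_gt0.
rewrite -(gt0_muley w_gt0) -(inf_h _ (is_instr_shift _ hx)).
exact: expected_T_first_step.
Qed.

End GuidedWalk.

Lemma int_succ_pred_closed (Q : int -> Prop) :
  (forall n, Q n -> Q (n + 1)) -> (forall n, Q n -> Q (n - 1)) ->
  forall m n, Q m -> Q n.
Proof.
move=> QS QP m n Qm.
have Qk k : Q (m + k%:Z) /\ Q (m - k%:Z).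
  elim: k => [|k [QmSk QmPk]]; first by rewrite oppr0 addr0.
  split; rewrite intS ?opprD addrCA addrC; [exact: QS | exact: QP].
have -> : n = m + (n - m) by rewrite addrC subrK.
by case: (n - m) => k; [case: (Qk k) | rewrite NegzE; case: (Qk k.+1)].
Qed.

Section PuncturedPlane.
Variable P : pt -> Prop.
Hypothesis P_step : forall h d, h <> origin -> P (ptsub h (dirv d)) -> P h.

Lemma punctured_row b a a' : b != 0 -> P (a, b) -> P (a', b).
Proof.
move=> b0; have hne c : (c, b) <> origin by case=> _ /eqP; rewrite (negbTE b0).
apply: (int_succ_pred_closed (fun a => P (a, b))) => {}a Pa.
  by apply: (P_step _ (@Ordinal 4 0 isT) (hne _)); rewrite /ptsub /= addrK subr0.
by apply: (P_step _ (@Ordinal 4 1 isT) (hne _)); rewrite /ptsub /= opprK subrK subr0.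
Qed.

Lemma punctured_col a b b' : a != 0 -> P (a, b) -> P (a, b').
Proof.
move=> a0; have hne c : (a, c) <> origin by case=> /eqP; rewrite (negbTE a0).
apply: (int_succ_pred_closed (fun b => P (a, b))) => {}b Pb.
  by apply: (P_step _ (@Ordinal 4 2 isT) (hne _)); rewrite /ptsub /= addrK subr0.
by apply: (P_step _ (@Ordinal 4 3 isT) (hne _)); rewrite /ptsub /= opprK subrK subr0.
Qed.

Lemma punctured_iff11 h : h <> origin -> P h <-> P (1, 1).
Proof.
case: h => a b hne; have [b0 | b0] := eqVneq b 0.
  have a0 : a != 0 by apply: contra_not_neq hne => a0; rewrite a0 b0.
  rewrite b0; split=> [/(punctured_col a 0 1 a0)/(punctured_row 1 a 1 isT) //|].
  by move=> /(punctured_row 1 1 a isT)/(punctured_col a 1 0 a0).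
split=> [/(punctured_row b a 1 b0)/(punctured_col 1 b 1 isT) //|].
by move=> /(punctured_col 1 1 b isT)/(punctured_row b 1 a b0).
Qed.

Lemma punctured_connected h h' : h <> origin -> h' <> origin -> P h -> P h'.
Proof. by move=> /punctured_iff11 Ph /punctured_iff11 Ph' /Ph /Ph'. Qed.

End PuncturedPlane.

Theorem lemma1 (R : realType) (p : R) (hp0 : 0 < p) (hp1 : p <= 1) :
  (exists home0 : pt, forall x : nat -> pt, is_instr x ->
      expected_T p x home0 = +oo%E) ->
  forall home : pt, home <> origin ->
  forall x : nat -> pt, is_instr x -> expected_T p x home = +oo%E.
Proof.
move=> [h0 inf_h0] h hne.
have h0ne : h0 <> origin.
  by move=> h0E; move: (inf_h0 _ is_instr_straight); rewrite h0E expected_T_origin.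
pose infinite_mean h := forall x, is_instr x -> expected_T p x h = +oo%E.
apply: (@punctured_connected infinite_mean _ h0 h h0ne hne inf_h0) => h1 d.
by rewrite /infinite_mean; apply: expected_T_infinite_step.
Qed.
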